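(* Let $q$ be a prime power, let $\mathcal{F}=(\mathcal{F}_1,\ldots,\mathcal{F}_r)$ be a flag on $\mathbb{F}_{q^n}$ and let $\beta\in\mathbb{F}_{q^n}^*$. Assume the subfield $\mathbb{F}_{q^m}$ is the best friend of $\mathcal{F}$. Then $$|\mathrm{Orb}_\beta(\mathcal{F})|=\frac{|\beta|}{|\langle\beta\rangle\cap\mathbb{F}_{q^m}^*|}.$$ In particular, if $\beta$ is a primitive element of $\mathbb{F}_{q^n}$, then $|\mathrm{Orb}(\mathcal{F})|=\frac{q^n-1}{q^m-1}$.
   Context: A flag on $\mathbb{F}_{q^n}$ is a sequence $(\mathcal{F}_1,\ldots,\mathcal{F}_r)$ of $\mathbb{F}_q$-subspaces with $\{0\}\subsetneq\mathcal{F}_1\subsetneq\cdots\subsetneq\mathcal{F}_r\subsetneq\mathbb{F}_{q^n}$. For $\gamma\in\mathbb{F}_{q^n}^*$, $\mathcal{F}\gamma=(\mathcal{F}_1\gamma,\ldots,\mathcal{F}_r\gamma)$ with $\mathcal{U}\gamma=\{u\gamma:u\in\mathcal{U}\}$. For $\beta\in\mathbb{F}_{q^n}^*$ of multiplicative order $|\beta|$, $\mathrm{Orb}_\beta(\mathcal{F})=\{\mathcal{F}\beta^j:0\le j\le|\beta|-1\}$; $\mathrm{Orb}(\mathcal{F})=\{\mathcal{F}\gamma:\gamma\in\mathbb{F}_{q^n}^*\}$. A subfield $\mathbb{F}_{q^m}$ is a friend of $\mathcal{F}$ if every $\mathcal{F}_i$ is an $\mathbb{F}_{q^m}$-vector space;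 the best friend is the largest friend. *)

From HB Require Import structures.
From mathcomp Require Import all_boot all_order all_algebra all_field.
Set Implicit Arguments. Unset Strict Implicit. Unset Printing Implicit Defensive.
Import GRing.Theory.
Local Open Scope ring_scope.

(* Setting: F = F_q a finite field (q = #|F|), L = F_{q^n} a finite field
   extension of F (n = \dim {:L}); F_q-subspaces of L are the {vspace L};
   subfields F_{q^m} of L (containing F_q) are the {subfield L}, m = \dim K. *)

Section FlagDefs.
Variables (F : finFieldType) (L : fieldExtType F).

Definition is_flag (Fs : seq {vspace L}) : bool :=
  [&& (0 < size Fs)%N,
      path (fun U V : {vspace L} => (U <= V)%VS && (U != V)) 0%VS Fs
    & (last 0%VS Fs != fullv)].

Definition vsmul (U : {vspace L}) (g : L) : {vspace L} := (U * <[g]>)%VS.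

Definition flag_mul (Fs : seq {vspace L}) (g : L) : seq {vspace L} :=
  map (fun U => vsmul U g) Fs.

Definition is_morder (b : L) (k : nat) : Prop :=
  [/\ (0 < k)%N, b ^+ k = 1 & forall j, (0 < j < k)%N -> b ^+ j != 1].

Definition orb_beta (Fs : seq {vspace L}) (b : L) (k : nat) : seq (seq {vspace L}) :=
  undup [seq flag_mul Fs (b ^+ j) | j <- iota 0 k].

Definition orb (Fs : seq {vspace L}) : seq (seq {vspace L}) :=
  undup [seq flag_mul Fs (g : L) | g <- enum (finvect_type L) & (g : L) != 0].

(* |<beta> /\ K^*| : number of j < |beta| with beta^j in K
   (the beta^j, j < |beta|, are the distinct elements of <beta>, all nonzero) *)
Definition cyc_cap (b : L) (k : nat) (K : {subfield L}) : nat :=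
  size [seq j <- iota 0 k | b ^+ j \in K].

(* K is a friend of the flag: every F_i is a K-vector space *)
Definition friend (K : {subfield L}) (Fs : seq {vspace L}) : bool :=
  all (fun U : {vspace L} => (K * U <= U)%VS) Fs.

Definition best_friend (K : {subfield L}) (Fs : seq {vspace L}) : Prop :=
  friend K Fs /\ forall K' : {subfield L}, friend K' Fs -> (K' <= K)%VS.
End FlagDefs.

From HB Require Import structures.
From mathcomp Require Import all_boot all_order all_algebra all_field.
Import GRing.Theory.
Local Open Scope ring_scope.

(* For nonzero x, y we have F y = F x iff y / x stabilises every F_i, and the
   nonzero stabilisers are exactly the elements of the best friend K: if t
   stabilises every F_i then so does the field K(t), which is therefore a
   friend contained in K.  Hence on a finite multiplicative group G (here <b>
   or L^* ) the map x |-> F x is constant exactly on the cosets of G /\ K^*,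
   and |orbit| * |G /\ K^*| = |G|. *)

Lemma size_undup_map_mul (T U : eqType) (f : T -> U) (s : seq T) c :
  {in s, forall x, count (fun y => f y == f x) s = c} ->
  (size (undup (map f s)) * c = size s)%N.
Proof.
move=> fibre_c; rewrite -(size_map f s) -(perm_size (perm_count_undup (map f s))).
rewrite size_flatten /shape -map_comp sumnE big_map (eq_big_seq (fun=> c)) => [|y].
  by rewrite big_const_seq count_predT iter_addn_0 mulnC.
rewrite mem_undup => /mapP[x sx ->] /=.
by rewrite size_nseq count_map -(fibre_c x sx); apply: eq_count => z /=; rewrite eq_sym.
Qed.

Section DivisionClosed.
Context {R : fieldType} {s : seq R}.
Hypotheses (s_uniq : uniq s) (s_div : {in s &, forall x y, y / x \in s}).

Lemma perm_map_divr x : x \in s -> x != 0 -> perm_eq [seq y / x | y <- s] s.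
Proof.
move=> sx nz_x; have div_uniq : uniq [seq y / x | y <- s].
  by rewrite map_inj_uniq // => y z /(mulIf (invr_neq0 nz_x)).
have div_sub : {subset [seq y / x | y <- s] <= s}.
  by move=> _ /mapP[y sy ->]; apply: s_div.
have [_ div_eq_s] := uniq_min_size div_uniq div_sub (eq_leq (esym (size_map _ _))).
by rewrite uniq_perm.
Qed.

Lemma count_divr_mem (K : {pred R}) x : x \in s -> x != 0 ->
  count (fun y => y / x \in K) s = count (mem K) s.
Proof. by move=> sx nz_x; rewrite -(permP (perm_map_divr x sx nz_x) (mem K)) count_map. Qed.

End DivisionClosed.

Section PrimitiveRootPowers.
Context {R : fieldType} {n : nat} {z : R}.
Hypothesis prim_z : n.-primitive_root z.
Local Notation powers := [seq z ^+ j | j <- iota 0 n].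

Lemma prim_root_powersP x : (x \in powers) = (x ^+ n == 1).
Proof.
apply/mapP/eqP => [[j _ ->] | /(prim_rootP prim_z)[i ->]].
  by rewrite exprAC (prim_expr_order prim_z) expr1n.
by exists (val i); rewrite /= ?mem_iota ?ltn_ord.
Qed.

Lemma uniq_prim_root_powers : uniq powers.
Proof.
rewrite map_inj_in_uniq ?iota_uniq // => i j.
rewrite !mem_iota !add0n => i_lt_n j_lt_n /eqP.
by rewrite (eq_prim_root_expr prim_z) !modn_small // => /eqP.
Qed.

Lemma prim_root_powers_neq0 : 0 \notin powers.
Proof.
by rewrite prim_root_powersP expr0n gtn_eqF ?(prim_order_gt0 prim_z) // eq_sym oner_eq0.
Qed.

Lemma prim_root_powers_div_closed : {in powers &, forall x y, y / x \in powers}.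
Proof.
move=> x y; rewrite !prim_root_powersP => /eqP x_n /eqP y_n.
by rewrite expr_div_n x_n y_n divr1.
Qed.

End PrimitiveRootPowers.

Section Stabilizer.
Context {F : finFieldType} {L : fieldExtType F}.

Lemma vsmulM (U : {vspace L}) (x y : L) : vsmul (vsmul U x) y = vsmul U (x * y).
Proof. by rewrite /vsmul -prodvA prodv_line. Qed.

Lemma vsmul1 (U : {vspace L}) : vsmul U 1 = U.
Proof. by rewrite /vsmul prodv1. Qed.

Lemma vsmul_id {U : {vspace L}} {t : L} : t != 0 -> (vsmul U t <= U)%VS -> vsmul U t = U.
Proof.
move=> nz_t tU; apply/eqP.
by rewrite eqEdim tU /vsmul dim_cosetv_unit ?unitfE ?leqnn.
Qed.

Lemma vsmul_sub_mem {K U : {vspace L}} {t : L} :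
  (K * U <= U)%VS -> t \in K -> (vsmul U t <= U)%VS.
Proof.
move=> KU Kt; apply/prodvP => u _ Uu /vlineP[a ->].
by rewrite -scalerAr memvZ // mulrC (subvP KU) ?memv_mul.
Qed.

Lemma adjoin_prodv_sub {K U : {vspace L}} {t : L} :
  (K * U <= U)%VS -> (vsmul U t <= U)%VS -> (<<K; t>> * U <= U)%VS.
Proof. by move=> KU tU; apply: agenv_modl; rewrite prodvDl subv_add KU prodvC. Qed.

Lemma flag_mulM (Fs : seq {vspace L}) (x y : L) :
  flag_mul (flag_mul Fs x) y = flag_mul Fs (x * y).
Proof. by rewrite /flag_mul -map_comp; apply: eq_map => U; apply: vsmulM. Qed.

Lemma flag_mul1 (Fs : seq {vspace L}) : flag_mul Fs 1 = Fs.
Proof. by rewrite /flag_mul (eq_map (@vsmul1)) map_id. Qed.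

Lemma flag_mulK {x : L} : x != 0 -> cancel (fun Fs => flag_mul Fs x) (fun Fs => flag_mul Fs x^-1).
Proof. by move=> nz_x Fs; rewrite flag_mulM mulfV ?flag_mul1. Qed.

Context {Fs : seq {vspace L}} {K : {subfield L}}.
Hypothesis K_best : best_friend K Fs.

Lemma flag_mul_fixed (t : L) : t != 0 -> (flag_mul Fs t == Fs) = (t \in K).
Proof.
case: K_best => /allP K_fr K_max nz_t; apply/eqP/idP => [tFs | Kt].
  have {}tFs : {in Fs, forall U, vsmul U t = U}.
    by apply/eq_in_map; rewrite map_id.
  suff /K_max/subvP : friend <<K; t>>%AS Fs by apply; apply: memv_adjoin.
  apply/allP => U FsU; apply: adjoin_prodv_sub; first exact: K_fr.
  by rewrite tFs.
rewrite -[RHS]map_id; apply/eq_in_map => U FsU.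
exact: vsmul_id nz_t (vsmul_sub_mem (K_fr U FsU) Kt).
Qed.

Lemma flag_mul_eq (x y : L) : x != 0 -> y != 0 ->
  (flag_mul Fs y == flag_mul Fs x) = (y / x \in K).
Proof.
move=> nz_x nz_y; rewrite -flag_mul_fixed ?mulf_neq0 ?invr_eq0 //.
by rewrite -(inj_eq (can_inj (flag_mulK (invr_neq0 nz_x)))) !flag_mulM mulfV ?flag_mul1.
Qed.

Lemma size_flag_orbit_mul (s : seq L) : uniq s -> 0 \notin s ->
  {in s &, forall x y, y / x \in s} ->
  (size (undup (map (flag_mul Fs) s)) * count (mem K) s = size s)%N.
Proof.
move=> s_uniq s_neq0 s_div; apply: size_undup_map_mul => x sx.
have nz_x : x != 0 by apply: contraNneq s_neq0 => <-.
rewrite -(count_divr_mem s_uniq s_div K x sx nz_x); apply: eq_in_count => y sy /=.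
by rewrite flag_mul_eq //; apply: contraNneq s_neq0 => <-.
Qed.

End Stabilizer.

Lemma count_enum (T : finType) (P : pred T) : count P (enum T) = #|P|.
Proof. by rewrite cardE enumT /enum_mem size_filter. Qed.

Section Orbits.
Context {F : finFieldType} {L : fieldExtType F}.

Definition nonzero_vectors : seq L := [seq g <- enum (finvect_type L) | (g : L) != 0].

Lemma count_mem_nonzero_vectors (V : {vspace L}) :
  count (mem V) nonzero_vectors = (#|F| ^ \dim V - 1)%N.
Proof.
rewrite count_filter (@count_enum (finvect_type L)) -(@card_vspace F (finvect_type L) _ V).
rewrite [in RHS](cardD1 (0 : finvect_type L)) mem0v add1n subn1 /=.
by apply: eq_card => x; rewrite !inE andbC.
Qed.

Lemma size_nonzero_vectors : size nonzero_vectors = (#|F| ^ \dim {:L} - 1)%N.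
Proof.
rewrite -count_mem_nonzero_vectors -[LHS]count_predT.
by apply: eq_count => x; rewrite /= memvf.
Qed.

Lemma nonzero_vectors_div_closed : {in nonzero_vectors &, forall x y, y / x \in nonzero_vectors}.
Proof.
move=> x y /[!mem_filter] /andP[nz_x _] /andP[nz_y _].
rewrite mulf_neq0 ?invr_eq0 //= -enumT; exact: (mem_enum (finvect_type L)).
Qed.

Lemma is_morder_prim_root (b : L) k : is_morder b k -> k.-primitive_root b.
Proof.
case=> k_gt0 bk1 b_min; apply/andP; split=> //; apply/forallP => i /=.
rewrite unity_rootE; have [->|ne_k] := eqVneq i.+1 k; first by rewrite bk1 eqxx.
by rewrite (negbTE (b_min _ _)) //= [(_ < k)%N]ltn_neqAle ne_k ltn_ord.
Qed.

Lemma orb_betaE (Fs : seq {vspace L}) (b : L) k :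
  orb_beta Fs b k = undup (map (flag_mul Fs) [seq b ^+ j | j <- iota 0 k]).
Proof. by rewrite /orb_beta -map_comp. Qed.

Lemma cyc_capE (b : L) k (K : {subfield L}) :
  cyc_cap b k K = count (mem K) [seq b ^+ j | j <- iota 0 k].
Proof. by rewrite /cyc_cap size_filter count_map. Qed.

Lemma orbE (Fs : seq {vspace L}) : orb Fs = undup (map (flag_mul Fs) nonzero_vectors).
Proof. by []. Qed.

End Orbits.

Theorem proposition4p1 (F : finFieldType) (L : fieldExtType F)
    (Fs : seq {vspace L}) (K : {subfield L}) (b : L) (k : nat) :
  is_flag Fs -> best_friend K Fs -> b != 0 -> is_morder b k ->
  (size (orb_beta Fs b k) * cyc_cap b k K = k)%N /\
  (size (orb Fs) * (#|F| ^ \dim K - 1) = #|F| ^ \dim {:L} - 1)%N.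
Proof.
move=> _ K_best _ /is_morder_prim_root prim_b; split.
  rewrite orb_betaE cyc_capE -[RHS](size_iota 0 k) -(size_map (fun j => b ^+ j)).
  apply: (size_flag_orbit_mul K_best).
  - exact: uniq_prim_root_powers.
  - exact: prim_root_powers_neq0.
  - exact: prim_root_powers_div_closed.
rewrite orbE -size_nonzero_vectors -count_mem_nonzero_vectors.
apply: (size_flag_orbit_mul K_best _ _ _ nonzero_vectors_div_closed).
  exact/filter_uniq/enum_uniq.
by rewrite mem_filter eqxx.
Qed.
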